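(* Let $k$ be a positive integer and $G$ a graph. Let $P_1$ and $P_2$ be vertex-disjoint paths in $G$, and let $Q_1,\dots,Q_\ell$ be pairwise vertex-disjoint paths in $G$, each having one endpoint in $V(P_1)$ and the other in $V(P_2)$ and being internally disjoint from $V(P_1\cup P_2)$. If $\ell \ge 2 + 3c^* k\log k$, then $P_1\cup P_2\cup\bigcup_{i=1}^{\ell} Q_i$ contains at least $k$ pairwise vertex-disjoint cycles, each of which contains at least two of the paths $Q_1,\dots,Q_\ell$.
   Context: All graphs are finite and simple; logarithms are base 2. $c^*\ge 1$ is a fixed constant given by the Erdős–Pósa theorem: for every positive integer $k$, every graph contains either $k$ pairwise vertex-disjoint cycles or a set of at most $c^* k\log k$ vertices meeting every cycle. *)

From Stdlib Require Import Reals.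
From mathcomp Require Import all_boot.
Set Implicit Arguments. Unset Strict Implicit. Unset Printing Implicit Defensive.

Definition simple_graph (T : finType) (e : rel T) : Prop :=
  symmetric e /\ irreflexive e.

Section Graphs.
Variables (T : finType) (e : rel T).

Definition is_path (p : seq T) : bool :=
  if p is x :: s then uniq p && path e x s else false.

Definition path_edge (p : seq T) (x y : T) : bool :=
  ((x, y) \in zip p (behead p)) || ((y, x) \in zip p (behead p)).

Definition is_cycle (c : seq T) : bool :=
  [&& 2 < size c, uniq c & cycle e c].

Definition cycle_edge (c : seq T) (x y : T) : bool :=
  ((x, y) \in zip c (rot 1 c)) || ((y, x) \in zip c (rot 1 c)).

Definition cycle_in (H : T -> T -> bool) (c : seq T) : Prop :=
  is_cycle c /\ forall x y, cycle_edge c x y -> H x y.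

Definition cycle_contains_path (c : seq T) (q : seq T) : Prop :=
  {subset q <= c} /\ forall x y, path_edge q x y -> cycle_edge c x y.

Definition has_k_disjoint_cycles (k : nat) : Prop :=
  exists C : 'I_k -> seq T,
    (forall i, is_cycle (C i)) /\
    (forall i j, i != j -> [disjoint C i & C j]).

End Graphs.

Definition log2 (x : R) : R := Rdiv (ln x) (ln 2).

Definition erdos_posa_constant (c : R) : Prop :=
  forall (k : nat), 0 < k ->
  forall (T : finType) (e : rel T), simple_graph e ->
    has_k_disjoint_cycles e k \/
    exists S : {set T},
      Rle (INR #|S|) (Rmult (Rmult c (INR k)) (log2 (INR k))) /\
      forall C : seq T, is_cycle e C -> exists2 v, v \in C & v \in S.

(* Let H be the union of P1, P2 and the Q_i.  Every cycle of H contains two of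
   the Q_i: a cycle using an edge of Q_i contains all of Q_i, because the inner
   vertices of Q_i have degree 2 in H, and a cycle using edges of at most one
   Q_i would have to live on P1 or P2 plus a single pendant edge.  By the
   Erdos-Posa property it then suffices to rule out a set S of at most
   c* k log k vertices meeting every cycle of H.  But H has maximum degree 3 and
   |V(H)| + l - 2 edges, so H - S keeps at least
   |V(H - S)| + l - 2 - 3|S| >= |V(H - S)| edges and still contains a cycle. *)

From Stdlib Require Import Reals Lra.
From mathcomp Require Import all_boot zify.
Set Implicit Arguments. Unset Strict Implicit. Unset Printing Implicit Defensive.

(* Over a finType, [size p] and [index x p] may carry different but convertible
   type instances, which [lia] would treat as distinct atoms: generalize them
   up to conversion first. *)
Ltac seq_lia :=
  repeat match goal with
  | H : ?t |- _ =>
      lazymatch t with is_true _ => idtac | _ = _ => idtac end;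
      lazymatch t with context [size _] => revert H | context [index _ _] => revert H end
  end;
  repeat match goal with H : _ |- _ => clear H end;
  repeat match goal with
  | |- context [@size ?A ?s] => let n := fresh "n" in set n := @size A s; clearbody n
  | |- context [@index ?A ?x ?s] => let n := fresh "i" in set n := @index A x s; clearbody n
  end; intros; lia.

Lemma uniq_flatten_map (I U : eqType) (f : I -> seq U) (s : seq I) :
  uniq s -> {in s, forall i, uniq (f i)} ->
  {in s &, forall i j z, z \in f i -> z \in f j -> i = j} ->
  uniq (flatten [seq f i | i <- s]).
Proof.
elim: s => //= i s IHs /andP[i_s Us] Uf f_inj.
have Uf' : {in s, forall j, uniq (f j)} by move=> j sj; apply: Uf; rewrite inE sj orbT.
have f_inj' : {in s &, forall j k z, z \in f j -> z \in f k -> j = k}.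
  by move=> j k sj sk; apply: f_inj; rewrite inE ?sj ?sk orbT.
rewrite cat_uniq Uf ?mem_head // IHs // andbT.
apply/hasPn => z /flatten_mapP[j sj zj]; apply/negP => zi.
have sj' : j \in i :: s by rewrite inE sj orbT.
by rewrite (f_inj i j (mem_head i s) sj' z zi zj) sj in i_s.
Qed.

Section PathAndCycleEdges.
Variable T : finType.
Implicit Types (p c : seq T) (x y v : T).

Lemma path_edgeC p x y : path_edge p x y = path_edge p y x.
Proof. by rewrite /path_edge orbC. Qed.

Lemma cycle_edgeC c x y : cycle_edge c x y = cycle_edge c y x.
Proof. by rewrite /cycle_edge orbC. Qed.

Lemma zip_beheadP x0 p x y :
  reflect (exists2 i, i.+1 < size p & (x, y) = (nth x0 p i, nth x0 p i.+1))
          ((x, y) \in zip p (behead p)).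
Proof.
have size_zip_behead : size (zip p (behead p)) = (size p).-1.
  by rewrite size_zip size_behead; lia.
apply: (iffP (nthP (x0, x0))) => [[i] | [i lt_ip ->]].
  rewrite size_zip_behead nth_zip_cond size_zip_behead => lt_ip.
  by rewrite lt_ip nth_behead => <-; exists i => //; lia.
exists i; first by rewrite size_zip_behead; lia.
by rewrite nth_zip_cond size_zip_behead ifT ?nth_behead //; lia.
Qed.

Lemma zip_behead_index p x y : uniq p -> (x, y) \in zip p (behead p) ->
  [/\ x \in p, y \in p & index y p = (index x p).+1].
Proof.
move=> Up /(zip_beheadP x) [i lt_ip [-> ->]]; have lt_i := ltnW lt_ip.
by rewrite !mem_nth ?index_uniq.
Qed.

Lemma path_edge_index p x y : uniq p -> path_edge p x y ->
  [/\ x \in p, y \in p & (index y p == (index x p).+1) || (index x p == (index y p).+1)].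
Proof.
by move=> Up /orP[] /(zip_behead_index Up) [? ? ->]; rewrite ?eqxx ?orbT.
Qed.

Lemma path_edge_nbrs x0 p v y : uniq p -> path_edge p v y ->
  y = nth x0 p (index v p).-1 \/ y = nth x0 p (index v p).+1.
Proof.
move=> Up /(path_edge_index Up) [_ py /orP[] /eqP idx].
  by right; rewrite -idx nth_index.
by left; rewrite idx /= nth_index.
Qed.

Lemma path_edge_end p v y y' : uniq p ->
  (index v p == 0) || (index v p == (size p).-1) ->
  path_edge p v y -> path_edge p v y' -> y = y'.
Proof.
move=> Up end_v /(path_edge_index Up) [_ py idx] /(path_edge_index Up) [_ py' idx'].
have lt_y : index y p < size p by rewrite index_mem.
have lt_y' : index y' p < size p by rewrite index_mem.
rewrite -(nth_index y py) -(nth_index y py'); congr nth; seq_lia.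
Qed.

Lemma path_edge_rel (e : rel T) x0 s a b :
  path e x0 s -> path_edge (x0 :: s) a b -> e a b || e b a.
Proof.
move=> /(pathP x0) e_path.
by case/orP => /(zip_beheadP x0) [i lt_is [-> ->]]; rewrite e_path ?orbT.
Qed.

Lemma mem_zip_rot1 c x y : uniq c ->
  ((x, y) \in zip c (rot 1 c)) = (x \in c) && (y == next c x).
Proof.
case: c => [//|y0 s]; rewrite rot1_cons /=.
elim: s {1 2 4 6}y0 => [|z s IHs] z0 /= Us.
  by rewrite !inE xpair_eqE; case: eqP.
rewrite inE xpair_eqE IHs; last by case/andP: Us.
case: (x =P z0) => [-> | /eqP/negbTE x_z0]; last by rewrite [x \in z0 :: _]inE x_z0.
case/andP: Us => /negbTE z0_notin _.
by rewrite z0_notin mem_head /= orbF.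
Qed.

Lemma cycle_edgeE c x y : uniq c ->
  cycle_edge c x y = (x \in c) && ((y == next c x) || (y == prev c x)).
Proof.
move=> Uc; rewrite /cycle_edge !mem_zip_rot1 //.
case cx: (x \in c) => /=; last first.
  by apply/negbTE/andP => -[cy /eqP xE]; rewrite xE mem_next cy in cx.
congr orb; apply/andP/eqP => [[cy /eqP ->] | ->]; first by rewrite prev_next.
by rewrite mem_prev cx next_prev.
Qed.

Lemma cycle_edge_mem c x y : uniq c -> cycle_edge c x y -> x \in c /\ y \in c.
Proof.
move=> Uc exy; split; last rewrite cycle_edgeC in exy.
all: by move: exy; rewrite cycle_edgeE // => /andP[].
Qed.

Lemma next_neq_prev c x : uniq c -> 2 < size c -> x \in c -> next c x != prev c x.
Proof.
move=> Uc c3 /rot_to[i s rot_c].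
rewrite -(next_rot i Uc) -(prev_rot i Uc) rot_c.
have := rot_uniq i c; have := size_rot i c; rewrite rot_c Uc => sz /andP[x_s Us].
case: s sz x_s Us {rot_c} => [|y [|z s]] sz x_s Us; try by rewrite -sz in c3.
rewrite prev_nth mem_head (memNindex x_s) /next /= eqxx.
rewrite -[size s]/((size (z :: s)).-1) nth_last.
by case/andP: Us => y_zs _; apply: contraNneq y_zs => /= ->; apply: mem_last.
Qed.

Lemma cycle_edge_rel (r : rel T) c x y :
  symmetric r -> is_cycle r c -> cycle_edge c x y -> r x y.
Proof.
move=> r_sym /and3P[_ Uc cyc]; rewrite cycle_edgeE // => /andP[cx /orP[] /eqP->].
  exact: next_cycle.
by rewrite r_sym; apply: prev_cycle.
Qed.

Lemma is_path_uniq (e : rel T) p : is_path e p -> uniq p.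
Proof. by case: p => //= x s /andP[]. Qed.

Lemma is_path_edge (e : rel T) p x y :
  symmetric e -> is_path e p -> path_edge p x y -> e x y.
Proof.
move=> e_sym; case: p => //= x0 s /andP[_ /path_edge_rel] e_path /e_path.
by rewrite e_sym orbb.
Qed.

Lemma card_path_edge p v : uniq p -> #|[set y | path_edge p v y]| <= 2 * (v \in p).
Proof.
move=> Up; have [pv | /negbTE pv] := boolP (v \in p); last first.
  rewrite leqn0 cards_eq0; apply/eqP/setP => y; rewrite !inE.
  by apply/negP => /(path_edge_index Up)[]; rewrite pv.
pose N := [set nth v p (index v p).-1; nth v p (index v p).+1].
apply: (leq_trans (subset_leq_card (_ : _ \subset N))); last by rewrite cards2; case: (_ != _).
by apply/subsetP => y; rewrite !inE => /(path_edge_nbrs v Up)[] ->; rewrite eqxx ?orbT.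
Qed.

Lemma card_path_edge_end p v : uniq p ->
  (index v p == 0) || (index v p == (size p).-1) -> #|[set y | path_edge p v y]| <= 1.
Proof.
move=> Up end_v; apply/card_le1_eqP => y y'; rewrite !inE => vy vy'.
exact: path_edge_end Up end_v vy' vy.
Qed.

Definition arcs p := zip p (behead p) ++ zip (behead p) p.

Lemma mem_zip_swap (s t : seq T) x y : ((x, y) \in zip s t) = ((y, x) \in zip t s).
Proof.
by elim: s t => [|a s IHs] [|b t] //=; rewrite !inE IHs !xpair_eqE andbC.
Qed.

Lemma mem_arcs p x y : ((x, y) \in arcs p) = path_edge p x y.
Proof. by rewrite mem_cat [(x, y) \in zip (behead p) p]mem_zip_swap. Qed.

Lemma size_arcs p : size (arcs p) = 2 * (size p).-1.
Proof.
by rewrite size_cat !size_zip size_behead; lia.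
Qed.

Lemma uniq_arcs p : uniq p -> uniq (arcs p).
Proof.
move=> Up; rewrite cat_uniq zip_uniql // zip_uniqr //= andbT.
apply/hasPn => -[x y]; rewrite mem_zip_swap => /(zip_behead_index Up)[_ _ idx_x].
by apply/negP => /(zip_behead_index Up)[_ _]; rewrite idx_x; seq_lia.
Qed.

End PathAndCycleEdges.

Section CyclesAlongPaths.
Variable T : finType.
Implicit Types (c q P : seq T) (x y v : T).

Definition shares_edge c q := [exists x, exists y, cycle_edge c x y && path_edge q x y].

Lemma shares_edge_contains c q : uniq c -> 2 < size c -> uniq q ->
  (forall v y, v \in c -> 0 < index v q < (size q).-1 ->
     cycle_edge c v y -> path_edge q v y) ->
  shares_edge c q -> cycle_contains_path c q.
Proof.
move=> Uc c3 Uq inner_edges /existsP[x /existsP[y /andP[cxy qxy]]].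
pose E s := cycle_edge c (nth x q s) (nth x q s.+1).
(* An inner vertex of q lying on c has its two q-neighbours as its two cycle
   neighbours, so the edges of q lying on c propagate along q. *)
have E_step s : s.+2 < size q -> E s = E s.+1.
  move=> lt_s; rewrite /E cycle_edgeC; set v := nth x q s.+1.
  have idx_v : index v q = s.+1 by rewrite index_uniq // ltnW.
  have [cv | /negbTE cv] := boolP (v \in c); last by rewrite !cycle_edgeE // cv.
  have inner_v : 0 < index v q < (size q).-1 by rewrite idx_v; seq_lia.
  have nbr w : cycle_edge c v w -> w = nth x q s \/ w = nth x q s.+2.
    by move/(inner_edges v w cv inner_v)/(path_edge_nbrs x Uq); rewrite idx_v.
  have [en ep] : cycle_edge c v (next c v) /\ cycle_edge c v (prev c v).
    by rewrite !cycle_edgeE // cv !eqxx orbT.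
  have [-> ->] : cycle_edge c v (nth x q s) /\ cycle_edge c v (nth x q s.+2).
    case: (nbr _ en) (nbr _ ep) (next_neq_prev Uc c3 cv) => <- [] <-;
      by rewrite ?eqxx.
  by [].
have [i lt_i Ei] : exists2 i, i.+1 < size q & E i.
  case/orP: qxy => /(zip_beheadP x) [i lt_i [ex ey]]; exists i => //.
    by rewrite /E -ex -ey.
  by rewrite /E -ex -ey cycle_edgeC.
have E_all s : s.+1 < size q -> E s.
  have E0 t : t.+1 < size q -> E t = E 0.
    by elim: t => [//|t IHt] lt_t; rewrite -E_step ?IHt //; seq_lia.
  by move=> lt_s; rewrite E0 // -(E0 i).
split.
  move=> v qv; have lt_v : index v q < size q by rewrite index_mem.
  have [lt_v1 | ge_v1] := ltnP (index v q).+1 (size q).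
    by have [] := cycle_edge_mem Uc (E_all _ lt_v1); rewrite nth_index.
  have lt_v1 : (index v q).-1.+1 < size q by seq_lia.
  have [_] := cycle_edge_mem Uc (E_all _ lt_v1).
  by rewrite prednK ?nth_index //; seq_lia.
move=> a b /orP[] /(zip_beheadP x) [j lt_j [-> ->]]; first exact: E_all.
by rewrite cycle_edgeC; apply: E_all.
Qed.

Lemma path_pendant_acyclic P c a (pend : pred T) :
  uniq P -> uniq c -> 2 < size c -> (exists2 x, x \in c & x \in P) ->
  {in pend &, forall y y', y = y'} ->
  (forall v y, v \in c -> v \in P -> cycle_edge c v y ->
     path_edge P v y \/ v = a /\ pend y) ->
  False.
Proof.
move=> UP Uc c3 [x cx Px] pend1 edges.
pose A := [pred v | (v \in c) && (v \in P)].
have nbr_edges v : v \in c -> cycle_edge c v (next c v) /\ cycle_edge c v (prev c v).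
  by move=> cv; rewrite !cycle_edgeE // cv !eqxx orbT.
have P_nbr v y : v \in A -> path_edge P v y -> cycle_edge c v y ->
    y \in A /\ (index y P == (index v P).+1) || (index v P == (index y P).+1).
  move=> Av /(path_edge_index UP) [_ Py idx] /(cycle_edge_mem Uc) [_ cy].
  by rewrite inE cy Py.
have index_inj y y' : y \in P -> y' \in P -> index y P = index y' P -> y = y'.
  by move=> Py Py' idx; rewrite -(nth_index x Py) idx nth_index.
(* The vertices of c on P of largest and of smallest index in P are both a,
   since any other vertex of c on P has cycle neighbours on P on both sides.
   So c meets P only in a, whose two cycle neighbours are then both in pend. *)
have extremal v : v \in A ->
    (forall y, y \in A -> index y P <= index v P) \/
    (forall y, y \in A -> index v P <= index y P) -> v = a.
  move=> Av ext; have /andP[cv Pv] := Av; have [en ep] := nbr_edges v cv.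
  case: (eqVneq v a) => // v_a.
  have [pn | [/eqP]] := edges v _ cv Pv en; last by rewrite (negbTE v_a).
  have [pp | [/eqP]] := edges v _ cv Pv ep; last by rewrite (negbTE v_a).
  have [An idx_n] := P_nbr v _ Av pn en; have [Ap idx_p] := P_nbr v _ Av pp ep.
  have /negP[] := next_neq_prev Uc c3 cv; apply/eqP/index_inj.
  - by case/andP: An.
  - by case/andP: Ap.
  by case: ext => ext; have := ext _ An; have := ext _ Ap; seq_lia.
have Ax : x \in A by rewrite inE cx Px.
have [m Am max_m] := @arg_maxnP _ x A (fun v => index v P) Ax.
have [m' Am' min_m] := @arg_minnP _ x A (fun v => index v P) Ax.
have ma : m = a by apply: extremal Am _; left.
have m'a : m' = a by apply: extremal Am' _; right.
subst m m'; have /andP[ca Pa] := Am.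
have pend_nbr y : cycle_edge c a y -> pend y.
  move=> ey; have [pe | [] //] := edges a y ca Pa ey.
  have [Ay idx] := P_nbr a y Am pe ey; have /andP[_ Py] := Ay.
  rewrite (index_inj y a Py Pa) in idx; first by seq_lia.
  by have := max_m y Ay; have := min_m y Ay; seq_lia.
have [en ep] := nbr_edges a ca.
by have := next_neq_prev Uc c3 ca; rewrite (pend1 _ _ (pend_nbr _ en) (pend_nbr _ ep)) eqxx.
Qed.

End CyclesAlongPaths.

Section CycleInDenseGraph.
Variables (T : finType) (r : rel T).
Hypotheses (r_sym : symmetric r) (r_irr : irreflexive r).
Implicit Types (V S : {set T}) (v w : T) (p : seq T).

(* Ordered pairs: twice the number of edges of the subgraph induced by V. *)
Definition arc_count V := #|[set xy : T * T | [&& xy.1 \in V, xy.2 \in V & r xy.1 xy.2]]|.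

Definition degree V v := #|[set w in V | r v w]|.

Lemma degree_le_card V v : v \in V -> degree V v < #|V|.
Proof.
move=> Vv; rewrite (cardsD1 v V) Vv ltnS; apply/subset_leq_card/subsetP => w.
by rewrite !inE => /andP[-> vw]; rewrite andbT; apply: contraTneq vw => ->; rewrite r_irr.
Qed.

Lemma arc_count_setD1 V v : arc_count V <= arc_count (V :\ v) + 2 * degree V v.
Proof.
set N := [set w in V | r v w].
have sub : [set xy : T * T | [&& xy.1 \in V, xy.2 \in V & r xy.1 xy.2]] \subset
    [set xy : T * T | [&& xy.1 \in V :\ v, xy.2 \in V :\ v & r xy.1 xy.2]]
    :|: ([set (v, w) | w in N] :|: [set (w, v) | w in N]).
  apply/subsetP => -[a b]; rewrite !inE /=.
  have [-> /and3P[_ Vb vb] | av] := eqVneq a v.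
    by rewrite (imset_f (pair v)) ?orbT // inE Vb vb.
  have [-> /and3P[Va _ av'] | bv /and3P[Va Vb ab]] := eqVneq b v.
    by rewrite (imset_f (pair^~ v)) ?orbT // inE Va r_sym av'.
  by rewrite /= Va Vb ab.
apply: (leq_trans (subset_leq_card sub)); rewrite mul2n -addnn.
apply: (leq_trans (leq_card_setU _ _)); rewrite leq_add2l.
by apply: (leq_trans (leq_card_setU _ _)); rewrite leq_add ?leq_imset_card.
Qed.

Lemma arc_count_setD d V S : (forall W v, degree W v <= d) ->
  arc_count V <= arc_count (V :\: S) + 2 * d * #|S|.
Proof.
move=> deg_d; move cardS: #|S| => n; elim: n S cardS => [|n IHn] S cardS.
  by rewrite (cards0_eq cardS) setD0 muln0 addn0.
have [s Ss] : exists s, s \in S by apply/card_gt0P; rewrite cardS.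
have cardSs : #|S :\ s| = n by move: cardS; rewrite (cardsD1 s S) Ss => -[].
have -> : V :\: S = (V :\: (S :\ s)) :\ s.
  by apply/setP => w; rewrite !inE; case: (w =P s) => [-> | _]; rewrite ?Ss ?andbF.
have := IHn _ cardSs; have := arc_count_setD1 (V :\: (S :\ s)) s.
have := deg_d (V :\: (S :\ s)) s; lia.
Qed.

Lemma extend_path_or_cycle V v p : 1 < degree V v -> uniq (v :: p) -> path r v p ->
  (exists c, is_cycle r c /\ {subset c <= v :: p}) \/
  exists w, [/\ w \in V, w \notin v :: p & r w v].
Proof.
move=> /card_gt1P[w1 [w2 [w1N w2N w12]]] Uvp vp.
have [w wN w_head] : exists2 w, w \in [set w in V | r v w] & w != head v p.
  by case: (eqVneq w1 (head v p)) => [e | ne]; [exists w2; rewrite // -e eq_sym | exists w1].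
move: wN; rewrite inE => /andP[Vw vw].
have [w_vp | w_vp] := boolP (w \in v :: p); last by right; exists w; rewrite r_sym.
left; have wv : w != v by apply: contraTneq vw => ->; rewrite r_irr.
move: w_vp; rewrite inE (negbTE wv) /= => /splitPr w_p.
case: w_p Uvp vp w_head => p1 p2; rewrite -cat_rcons -cat_cons cat_uniq cat_path.
move=> /andP[U1 _] /andP[vp1 _] w_head; exists (v :: rcons p1 w); split; last first.
  by move=> x; rewrite mem_cat => ->.
apply/and3P; split => //; last by rewrite /= rcons_path vp1 last_rcons r_sym.
by case: p1 w_head {U1 vp1} => [|a p1] /=; rewrite ?eqxx // size_rcons.
Qed.

Lemma min_degree_cycle V : V != set0 -> {in V, forall v, 1 < degree V v} ->
  exists c, is_cycle r c /\ {subset c <= V}.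
Proof.
case/set0Pn => a Va deg2.
have size_le s : uniq s -> {subset s <= V} -> size s <= #|V|.
  by move=> Us sub; rewrite -(card_uniqP Us); apply/subset_leq_card/subsetP.
have step v p : uniq (v :: p) -> {subset v :: p <= V} -> path r v p ->
    (exists c, is_cycle r c /\ {subset c <= V}) \/
    exists w, [/\ uniq (w :: v :: p), {subset w :: v :: p <= V} & path r w (v :: p)].
  move=> Uvp sub vp; have [[c [cyc sub_c]] | [w [Vw w_vp wv]]] :=
    extend_path_or_cycle (deg2 v (sub v (mem_head v p))) Uvp vp.
    by left; exists c; split=> // x /sub_c/sub.
  right; exists w; split; rewrite /= ?w_vp ?wv //.
  by move=> x; rewrite inE => /predU1P[-> | /sub].
suff grow n v p : #|V| - size (v :: p) <= n -> uniq (v :: p) ->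
    {subset v :: p <= V} -> path r v p -> exists c, is_cycle r c /\ {subset c <= V}.
  by apply: (grow #|V| a [::]) => // [|x]; rewrite ?leq_subr // inE => /eqP->.
elim: n v p => [|n IHn] v p le_n Uvp sub vp;
  have [// | [w [Uw sub_w wvp]]] := step v p Uvp sub vp;
  have /= le_V := size_le _ Uw sub_w; move: le_n => /= le_n.
  by lia.
by apply: (IHn w (v :: p)) => //=; lia.
Qed.

Lemma arc_count_cycle V : 0 < arc_count V -> 2 * #|V| <= arc_count V ->
  exists c, is_cycle r c /\ {subset c <= V}.
Proof.
move cardV: #|V| => n; elim: n V cardV => [|n IHn] V cardV pos dense.
  by case/card_gt0P: pos => xy; rewrite (cards0_eq cardV) !inE.
have [v /andP[Vv deg_v] | deg2] := pickP [pred v in V | degree V v <= 1]; last first.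
  apply: min_degree_cycle => [|v Vv]; first by rewrite -card_gt0 cardV.
  by move: (deg2 v); rewrite /= Vv /= ltnNge => /negbT.
have cardVv : #|V :\ v| = n by move: cardV; rewrite (cardsD1 v V) Vv => -[].
have := arc_count_setD1 V v; have := degree_le_card Vv; rewrite cardV => lt_deg le_arc.
have [|||c [cyc sub]] := IHn (V :\ v); rewrite ?cardVv //; try lia.
by exists c; split=> // x /sub; rewrite inE => /andP[].
Qed.

End CycleInDenseGraph.

Section LinkedPaths.
Variables (T : finType) (e : rel T).
Hypothesis e_simple : simple_graph e.
Variables P1 P2 : seq T.
Hypotheses (P1_path : is_path e P1) (P2_path : is_path e P2) (P12 : [disjoint P1 & P2]).
Variables (l : nat) (Q : 'I_l -> seq T).
Hypotheses (Q_path : forall i, is_path e (Q i))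
  (Q_disj : forall i j, i != j -> [disjoint Q i & Q j])
  (Q_ends : forall i, exists x0,
      ((head x0 (Q i) \in P1) && (last x0 (Q i) \in P2)) \/
      ((head x0 (Q i) \in P2) && (last x0 (Q i) \in P1)))
  (Q_inner : forall i x0 v, v \in Q i -> (v \in P1) || (v \in P2) ->
      v = head x0 (Q i) \/ v = last x0 (Q i)).

Definition union_edge : rel T := fun x y =>
  [|| path_edge P1 x y, path_edge P2 x y | [exists i, path_edge (Q i) x y]].

Definition on_P v := (v \in P1) || (v \in P2).

Let P1_uniq := is_path_uniq P1_path.
Let P2_uniq := is_path_uniq P2_path.
Let Q_uniq i := is_path_uniq (Q_path i).

Lemma P1_P2F v : v \in P1 -> v \in P2 -> False.
Proof. by move=> v1; rewrite (disjointFr P12 v1). Qed.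

Lemma union_edge_sub : subrel union_edge e.
Proof.
have e_sym := e_simple.1.
move=> x y /or3P[/(is_path_edge e_sym P1_path) | /(is_path_edge e_sym P2_path) |] //.
by case/existsP => i /(is_path_edge e_sym (Q_path i)).
Qed.

Lemma union_edge_sym : symmetric union_edge.
Proof.
move=> x y; rewrite /union_edge path_edgeC [path_edge P2 x y]path_edgeC.
by congr [|| _, _ | _]; apply: eq_existsb => i; rewrite path_edgeC.
Qed.

Lemma union_edge_irr : irreflexive union_edge.
Proof. by move=> x; apply/negP => /union_edge_sub; rewrite e_simple.2. Qed.

Lemma Q_shape i : exists h m t, [/\ Q i = h :: rcons m t,
  (h \in P1) && (t \in P2) || (h \in P2) && (t \in P1) & {in m, forall v, ~~ on_P v}].
Proof.
have [x0 ends] := Q_ends i; have Uq := Q_uniq i.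
case def_q: (Q i) (Q_path i) => [// | h s] _; rewrite def_q /= in ends Uq.
case/lastP: s def_q ends Uq => [|m t] def_q ends Uq.
  by exfalso; case: ends => /andP[h1 h2]; apply: (P1_P2F (v := h)).
exists h, m, t; rewrite last_rcons in ends; split=> //; first by case: ends => ->; rewrite ?orbT.
move=> v mv; apply/negP => Pv.
have qv : v \in Q i by rewrite def_q inE mem_rcons inE mv !orbT.
case/andP: Uq; rewrite rcons_uniq => h_notin /andP[t_notin _].
case: (Q_inner x0 qv Pv); rewrite def_q /= ?last_rcons => vE.
  by rewrite mem_rcons inE -vE mv orbT in h_notin.
by rewrite -vE mv in t_notin.
Qed.

Lemma Q_on_P_end i v : v \in Q i -> on_P v ->
  (index v (Q i) == 0) || (index v (Q i) == (size (Q i)).-1).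
Proof.
have [h [m [t [def_q _ m_off]]]] := Q_shape i; have := Q_uniq i.
rewrite def_q => Uq; rewrite inE mem_rcons inE => /or3P[/eqP-> | /eqP-> | /m_off/negbTE->] //.
- by rewrite /= eqxx.
- by have := index_last Uq; rewrite last_rcons => ->; rewrite eqxx orbT.
Qed.

Lemma Q_side_unique i P v w : P = P1 \/ P = P2 ->
  v \in Q i -> w \in Q i -> v \in P -> w \in P -> v = w.
Proof.
move=> sideP; have [h [m [t [def_q ends m_off]]]] := Q_shape i.
have onP u : u \in P -> on_P u by case: sideP => -> Pu; rewrite /on_P Pu ?orbT.
have ht u : u \in Q i -> u \in P -> u = h \/ u = t.
  rewrite def_q inE mem_rcons inE => /or3P[/eqP | /eqP | /m_off/negP mu /onP //]; by [left | right].
have not_both : h \in P -> t \in P -> False.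
  by case: sideP ends => -> /orP[] /andP[h1 h2] h3 h4;
    [apply: (P1_P2F (v := t)) | apply: (P1_P2F (v := h))
    | apply: (P1_P2F (v := h)) | apply: (P1_P2F (v := t))].
move=> qv qw Pv Pw; have [vE wE] := (ht v qv Pv, ht w qw Pw).
by case: vE wE Pv Pw => -> [] -> // Pv Pw; case: not_both.
Qed.

Lemma Q_meets_P1 i : exists2 a, a \in Q i & a \in P1.
Proof.
have [h [m [t [-> ends _]]]] := Q_shape i.
case/orP: ends => /andP[h1 h2]; first by exists h; rewrite ?mem_head.
by exists t; rewrite // inE mem_rcons mem_head orbT.
Qed.

Lemma Q_off_P_size i : size [seq v <- Q i | ~~ on_P v] + 2 <= size (Q i).
Proof.
have [h [m [t [-> ends _]]]] := Q_shape i.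
have [Ph Pt] : on_P h /\ on_P t.
  by rewrite /on_P; case/orP: ends => /andP[-> ->]; rewrite ?orbT.
by rewrite /= Ph /= filter_rcons Pt /= size_rcons addn2 !ltnS size_filter count_size.
Qed.

Lemma union_edge_off_P i v y : v \in Q i -> ~~ on_P v -> union_edge v y -> path_edge (Q i) v y.
Proof.
move=> qv; rewrite /on_P negb_or => /andP[/negbTE v1 /negbTE v2].
case/or3P=> [/(path_edge_index P1_uniq)[] | /(path_edge_index P2_uniq)[] |]; rewrite ?v1 ?v2 //.
case/existsP => j qjvy; have [-> // | ij] := eqVneq i j.
by have [qjv _ _] := path_edge_index (Q_uniq j) qjvy; rewrite (disjointFr (Q_disj ij) qv) in qjv.
Qed.

Lemma union_edge_at_P P v y : P = P1 \/ P = P2 -> v \in P -> union_edge v y ->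
  path_edge P v y \/ exists i, path_edge (Q i) v y.
Proof.
move=> sideP Pv /or3P[e1 | e2 | /existsP[i qi]]; last by right; exists i.
- case: sideP => PE; subst P; first by left.
  by have [v1 _ _] := path_edge_index P1_uniq e1; case: (P1_P2F v1 Pv).
- case: sideP => PE; subst P; last by left.
  by have [v2 _ _] := path_edge_index P2_uniq e2; case: (P1_P2F Pv v2).
Qed.

Lemma union_degree W v : degree union_edge W v <= 3.
Proof.
pose N p := [set y | path_edge p v y].
have NP p : uniq p -> #|N p| <= 2 * (v \in p) by move=> Up; apply: card_path_edge.
have P12v : (v \in P1) + (v \in P2) <= 1.
  by case: (boolP (v \in P1)) => [v1 | _]; [rewrite (disjointFr P12 v1) | case: (_ \in P2)].
have card3 (A B C : {set T}) : #|A :|: B :|: C| <= #|A| + #|B| + #|C|.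
  by apply: leq_trans (leq_card_setU _ _) _; rewrite leq_add2r leq_card_setU.
have Q_nbr j w : path_edge (Q j) v w -> v \in Q j.
  by case/(path_edge_index (Q_uniq j)).
have [i qi | noQ] := pickP (fun i => v \in Q i).
  have sub : [set w in W | union_edge v w] \subset N P1 :|: N P2 :|: N (Q i).
    apply/subsetP => w; rewrite !inE => /andP[_ /or3P[-> | -> | /existsP[j qj]]]; rewrite ?orbT //.
    have [ij | ij] := eqVneq i j; first by rewrite ij qj orbT.
    by have := Q_nbr j w qj; rewrite (disjointFr (Q_disj ij) qi).
  have NQ : #|N (Q i)| <= 2 - on_P v.
    have [Pv | _] := boolP (on_P v); last by have := NP _ (Q_uniq i); rewrite qi.
    exact: card_path_edge_end (Q_uniq i) (Q_on_P_end qi Pv).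
  apply: leq_trans (subset_leq_card sub) _; apply: leq_trans (card3 _ _ _) _.
  have := NP _ P1_uniq; have := NP _ P2_uniq; move: NQ P12v; rewrite /on_P.
  by set b1 := v \in P1; set b2 := v \in P2; lia.
have sub : [set w in W | union_edge v w] \subset N P1 :|: N P2 :|: set0.
  apply/subsetP => w; rewrite !inE => /andP[_ /or3P[-> | -> | /existsP[j qj]]]; rewrite ?orbT //.
  by have := noQ j; rewrite /= (Q_nbr _ _ qj).
apply: leq_trans (subset_leq_card sub) _; apply: leq_trans (card3 _ _ _) _.
by rewrite cards0; have := NP _ P1_uniq; have := NP _ P2_uniq; lia.
Qed.

Definition union_vertices :=
  P1 ++ P2 ++ flatten [seq [seq v <- Q i | ~~ on_P v] | i <- enum 'I_l].

Definition union_arcs := arcs P1 ++ arcs P2 ++ flatten [seq arcs (Q i) | i <- enum 'I_l].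

Lemma union_edge_vertices x y : union_edge x y -> x \in union_vertices.
Proof.
move=> exy; rewrite /union_vertices !mem_cat orbA.
have [Px | Px] := boolP (on_P x); first by apply/orP; left.
apply/orP; right; case/or3P: exy.
- by case/(path_edge_index P1_uniq) => x1 _ _; rewrite /on_P x1 in Px.
- by case/(path_edge_index P2_uniq) => x2 _ _; rewrite /on_P x2 orbT in Px.
case/existsP => i /(path_edge_index (Q_uniq i))[qx _ _].
by apply/flatten_mapP; exists i; rewrite ?mem_enum // mem_filter Px.
Qed.

Lemma no_common_edge i P x y : P = P1 \/ P = P2 ->
  path_edge P x y -> path_edge (Q i) x y -> False.
Proof.
move=> sideP Pxy Qxy; have UP : uniq P by case: sideP => ->.
have [Px Py idx] := path_edge_index UP Pxy; have [qx qy _] := path_edge_index (Q_uniq i) Qxy.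
by move: idx; rewrite (Q_side_unique sideP qx qy Px Py); seq_lia.
Qed.

Lemma uniq_union_arcs : uniq union_arcs.
Proof.
have arc_edge p xy : xy \in arcs p -> path_edge p xy.1 xy.2 by case: xy => x y; rewrite mem_arcs.
have arc_Q xy : xy \in flatten [seq arcs (Q i) | i <- enum 'I_l] ->
    exists i, path_edge (Q i) xy.1 xy.2.
  by case/flatten_mapP => i _ /arc_edge; exists i.
have noPQ P : P = P1 \/ P = P2 -> ~~ has (mem (arcs P)) (flatten [seq arcs (Q i) | i <- enum 'I_l]).
  move=> sideP; apply/hasPn => xy /arc_Q[i Qxy]; apply/negP => /arc_edge Pxy.
  exact: no_common_edge sideP Pxy Qxy.
rewrite /union_arcs cat_uniq (uniq_arcs P1_uniq) cat_uniq (uniq_arcs P2_uniq) has_cat negb_or.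
rewrite noPQ ?noPQ ?andbT /=; [| by right | by left].
apply/andP; split.
  apply/hasPn => xy /arc_edge/(path_edge_index P2_uniq)[x2 _ _]; apply/negP.
  by move=> /arc_edge/(path_edge_index P1_uniq)[x1 _ _]; apply: P1_P2F x1 x2.
apply: uniq_flatten_map => [|i _ |i j _ _ xy]; rewrite ?enum_uniq ?uniq_arcs //.
move=> /arc_edge/(path_edge_index (Q_uniq i))[qix _ _] /arc_edge/(path_edge_index (Q_uniq j))[qjx _ _].
by apply/eqP; apply: contraT => /Q_disj/disjointFr/(_ qix); rewrite qjx.
Qed.

Lemma union_arc_count :
  2 * #|[set v in union_vertices]| + 2 * l <= arc_count union_edge [set v in union_vertices] + 4.
Proof.
have arcs_le : size union_arcs <= arc_count union_edge [set v in union_vertices].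
  rewrite -(card_uniqP uniq_union_arcs); apply/subset_leq_card/subsetP => -[x y].
  move=> xy; have exy : union_edge x y.
    move: xy; rewrite mem_cat mem_arcs mem_cat mem_arcs /union_edge.
    case/or3P=> [-> // | -> | /flatten_mapP[i _]]; rewrite ?orbT // mem_arcs => qi.
    by apply/orP; right; apply/orP; right; apply/existsP; exists i.
  rewrite !inE /= exy andbT !(union_edge_vertices exy).
  by rewrite union_edge_sym in exy; rewrite (union_edge_vertices exy).
have vertices_ge : #|[set v in union_vertices]| <= size union_vertices.
  by rewrite cardsE card_size.
have sizes s : 2 * size (flatten [seq [seq v <- Q i | ~~ on_P v] | i <- s]) + 2 * size s <=
    size (flatten [seq arcs (Q i) | i <- s]).
  by elim: s => //= i s IHs; rewrite size_cat size_cat size_arcs; have := Q_off_P_size i; seq_lia.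
have := sizes (enum 'I_l); rewrite size_enum_ord.
move: arcs_le vertices_ge.
rewrite /union_arcs /union_vertices size_cat size_arcs size_cat size_arcs !size_cat.
have : 0 < size P1 by case: (P1) P1_path.
have : 0 < size P2 by case: (P2) P2_path.
seq_lia.
Qed.

Lemma union_cycle_avoiding (S : {set T}) : 2 + 3 * #|S| <= l ->
  exists c : seq T, is_cycle union_edge c /\ {in c, forall v, v \notin S}.
Proof.
move=> le_l; set V := [set v in union_vertices].
have V_gt0 : 0 < #|V|.
  have [x P1x] : exists x, x \in P1 by case: (P1) P1_path => // x s _; exists x; rewrite mem_head.
  by apply/card_gt0P; exists x; rewrite inE /union_vertices mem_cat P1x.
have le_card : #|V :\: S| <= #|V| by apply/subset_leq_card/subsetDl.
have := arc_count_setD union_edge_sym V S union_degree; have := union_arc_count.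
rewrite -/V => count_V count_VS.
have [||c [cyc sub]] := @arc_count_cycle _ _ union_edge_sym union_edge_irr (V :\: S); try lia.
by exists c; split=> // v /sub; rewrite inE => /andP[].
Qed.

Lemma union_cycle_in c : is_cycle union_edge c -> cycle_in e union_edge c.
Proof.
move=> cyc; split; last by move=> x y; apply: cycle_edge_rel union_edge_sym cyc.
by case/and3P: cyc => c3 Uc cyc; rewrite /is_cycle c3 Uc (sub_cycle union_edge_sub cyc).
Qed.

Lemma union_cycle_contains c i : is_cycle union_edge c ->
  shares_edge c (Q i) -> cycle_contains_path c (Q i).
Proof.
move=> cyc; have /and3P[c3 Uc _] := cyc.
apply: (shares_edge_contains Uc c3 (Q_uniq i)) => // v y cv idx cvy.
have qv : v \in Q i by rewrite -index_mem; seq_lia.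
apply: (union_edge_off_P qv _ (cycle_edge_rel union_edge_sym cyc cvy)).
by apply/negP => /(Q_on_P_end qv); seq_lia.
Qed.

Lemma union_cycle_side c P a (pend : pred T) :
  is_cycle union_edge c -> P = P1 \/ P = P2 -> (exists2 x, x \in c & x \in P) ->
  {in pend &, forall y y', y = y'} ->
  (forall i v y, shares_edge c (Q i) -> v \in P -> path_edge (Q i) v y -> v = a /\ pend y) ->
  False.
Proof.
move=> cyc sideP meet pend1 QR; have /and3P[c3 Uc _] := cyc.
have UP : uniq P by case: sideP => ->.
apply: (path_pendant_acyclic UP Uc c3 meet pend1) => v y cv Pv cvy.
have [|[i qvy]] := union_edge_at_P sideP Pv (cycle_edge_rel union_edge_sym cyc cvy).
  by left.
right; apply: (QR i v y _ Pv qvy).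
by apply/existsP; exists v; apply/existsP; exists y; rewrite cvy qvy.
Qed.

Lemma union_cycle_contains_two_Q c : is_cycle union_edge c ->
  exists i j, i != j /\ cycle_contains_path c (Q i) /\ cycle_contains_path c (Q j).
Proof.
move=> cyc; have /and3P[c3 Uc _] := cyc.
have [/existsP[i /existsP[j /and3P[ij si sj]]] | none2] :=
  boolP [exists i, exists j, [&& i != j, shares_edge c (Q i) & shares_edge c (Q j)]].
  by exists i, j; split=> //; split; apply: union_cycle_contains.
exfalso; have one i j : shares_edge c (Q i) -> shares_edge c (Q j) -> i = j.
  move=> si sj; apply/eqP; apply: contraNT none2 => ij.
  by apply/existsP; exists i; apply/existsP; exists j; rewrite ij si sj.
have [i si | none] := pickP (fun i => shares_edge c (Q i)).
  have [a qa P1a] := Q_meets_P1 i.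
  have a_end := Q_on_P_end qa (introT orP (or_introl P1a)).
  apply: (union_cycle_side (a := a) (pend := path_edge (Q i) a) cyc (or_introl erefl)).
  - by exists a => //; apply: (union_cycle_contains cyc si).1.
  - by move=> y y' ay ay'; apply: (path_edge_end (Q_uniq i) a_end ay ay').
  move=> j v y sj P1v; rewrite (one _ _ sj si) => qvy; suff va : v = a by rewrite va in qvy *.
  have [qv _ _] := path_edge_index (Q_uniq i) qvy.
  exact: Q_side_unique (or_introl erefl) qv qa P1v P1a.
have [x cx] : exists x, x \in c by case: (c) c3 => // x s _; exists x; rewrite mem_head.
have unshared (P : seq T) i v y : shares_edge c (Q i) -> v \in P -> path_edge (Q i) v y ->
    v = x /\ xpred0 y.
  by move=> si; have := none i; rewrite /= si.
have : union_edge x (next c x).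
  by apply: (cycle_edge_rel union_edge_sym cyc); rewrite cycle_edgeE // cx eqxx.
case/or3P=> [/(path_edge_index P1_uniq)[Px _ _] | /(path_edge_index P2_uniq)[Px _ _] |].
- by apply: (union_cycle_side cyc (or_introl erefl) _ _ (unshared P1)); first exists x.
- by apply: (union_cycle_side cyc (or_intror erefl) _ _ (unshared P2)); first exists x.
case/existsP => i qi; suff si : shares_edge c (Q i) by have := none i; rewrite /= si.
by apply/existsP; exists x; apply/existsP; exists (next c x); rewrite cycle_edgeE // cx eqxx.
Qed.

End LinkedPaths.

Theorem lemma2p8 (cstar : R) (hc1 : Rle 1 cstar)
  (hEP : erdos_posa_constant cstar)
  (k : nat) (hk : 0 < k)
  (T : finType) (e : rel T) (hG : simple_graph e)
  (P1 P2 : seq T) (hP1 : is_path e P1) (hP2 : is_path e P2)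
  (hP12 : [disjoint P1 & P2])
  (l : nat) (Q : 'I_l -> seq T)
  (hQpath : forall i, is_path e (Q i))
  (hQdisj : forall i j, i != j -> [disjoint Q i & Q j])
  (hQends : forall i, exists x0,
      ((head x0 (Q i) \in P1) && (last x0 (Q i) \in P2)) \/
      ((head x0 (Q i) \in P2) && (last x0 (Q i) \in P1)))
  (hQint : forall i x0 v, v \in Q i -> (v \in P1) || (v \in P2) ->
      v = head x0 (Q i) \/ v = last x0 (Q i))
  (hl : Rle (Rplus 2 (Rmult 3 (Rmult (Rmult cstar (INR k)) (log2 (INR k))))) (INR l)) :
  let H := fun x y => [|| path_edge P1 x y, path_edge P2 x y
                        | [exists i, path_edge (Q i) x y]] in
  exists C : 'I_k -> seq T,
    (forall m, cycle_in e H (C m)) /\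
    (forall m m', m != m' -> [disjoint C m & C m']) /\
    (forall m, exists i j, i != j /\
        cycle_contains_path (C m) (Q i) /\ cycle_contains_path (C m) (Q j)).
Proof.
move=> H.
have H_simple : simple_graph H := conj (union_edge_sym P1 P2 Q) (union_edge_irr hG hP1 hP2 hQpath).
have cycle_in_H := union_cycle_in hG hP1 hP2 hQpath.
have two_Q := union_cycle_contains_two_Q hP1 hP2 hP12 hQpath hQdisj hQends hQint.
have avoiding := union_cycle_avoiding hG hP1 hP2 hP12 hQpath hQdisj hQends hQint.
have [[C [C_cyc C_disj]] | [S [S_small S_hits]]] := hEP k hk T H H_simple.
  by exists C; split=> [m | ]; [exact: cycle_in_H | split=> // m; exact: two_Q].
have le_l : 2 + 3 * #|S| <= l.
  apply/leP/INR_le; rewrite plus_INR mult_INR /=.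
  have := pos_INR #|S|; lra.
have [c [c_cyc c_avoids]] := avoiding S le_l.
have [v cv vS] := S_hits c c_cyc.
by move: (c_avoids v cv); rewrite vS.
Qed.
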